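(* Let $G$ be a $3$-free digraph. Let $S$ be the number of ordered $4$-tuples $(a,b,c,d)$ of distinct vertices such that the subgraph induced on $\{a,b,c,d\}$ is a directed cycle of length $4$, and let $N$ be the set of all $4$-tuples $(p,q,r,s)\in V(G)^4$ (repetitions allowed) for which there is no directed path in $G$ with exactly four vertices whose vertex set is $\{p,q,r,s\}$. Then $|N| \geq \frac{2}{3}S$.
   Context: Digraphs are finite, loopless, with at most one edge $uv$ per ordered pair. A digraph is $3$-free if it has no directed cycle of length at most $3$. A directed path with four vertices is a sequence $v_1,v_2,v_3,v_4$ of distinct vertices with $v_iv_{i+1}\in E(G)$ for $i=1,2,3$. *)

(* A digraph on a finite vertex type T is a relation e : rel T
   (at most one edge per ordered pair is automatic); looplessness is
   irreflexivity. *)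
From mathcomp Require Import all_boot.
Set Implicit Arguments. Unset Strict Implicit. Unset Printing Implicit Defensive.

Section Digraphs.
Variable T : finType.
Variable e : rel T.

Definition loopless : Prop := irreflexive e.

(* 3-free: no directed cycle of length at most 3
   (length 1 = loop, length 2 = u->v->u, length 3 = u->v->w->u). *)
Definition three_free : Prop :=
  [/\ forall u, ~~ e u u,
      forall u v, u != v -> ~~ (e u v && e v u) &
      forall u v w, uniq [:: u; v; w] -> ~~ [&& e u v, e v w & e w u]].

Definition induced_dicycle4 (A : {set T}) : bool :=
  [exists w0, exists w1, exists w2, exists w3,
    [&& uniq [:: w0; w1; w2; w3], A == [set w0; w1; w2; w3] &
      [forall x in A, forall y in A,
        e x y == [|| (x == w0) && (y == w1), (x == w1) && (y == w2),
                     (x == w2) && (y == w3) | (x == w3) && (y == w0)]]]].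

Definition has_path4_on (A : {set T}) : bool :=
  [exists v1, exists v2, exists v3, exists v4,
    [&& uniq [:: v1; v2; v3; v4], e v1 v2, e v2 v3, e v3 v4 &
        A == [set v1; v2; v3; v4]]].

Definition vset4 (t : T * T * T * T) : {set T} :=
  let: (a, b, c, d) := t in [set a; b; c; d].

Definition distinct4 (t : T * T * T * T) : bool :=
  let: (a, b, c, d) := t in uniq [:: a; b; c; d].

Definition S_count : nat :=
  #|[set t : T * T * T * T | distinct4 t && induced_dicycle4 (vset4 t)]|.

Definition N_set : {set T * T * T * T} :=
  [set t : T * T * T * T | ~~ has_path4_on (vset4 t)].

End Digraphs.

From mathcomp Require Import all_boot all_order all_algebra.
From mathcomp Require Import ring lra.
Set Implicit Arguments. Unset Strict Implicit. Unset Printing Implicit Defensive.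
Import Order.TTheory GRing.Theory Num.Theory.

(* Let C be the set of ordered 4-tuples (a,b,c,d) with a->b->c->d->a.  We show
   S <= 6 |C| and 4 |C| <= |N|, whence 2 S <= 12 |C| <= 3 |N|.

   S <= 6 |C|: every ordered induced directed 4-cycle (a,b,c,d) has one of
   the six rearrangements (a,x,y,z) of its last three entries in C, and each
   rearrangement is a bijection of 4-tuples.

   4 |C| <= |N|: write between x z for the set of y with x->y->z.  For a
   cycle (a,b,c,d), the set U = between a c :|: between c a contains b and d,
   and no edge joins its two (disjoint) halves, as such an edge would close a
   directed triangle.  A directed path on 4 vertices inside U thus stays in
   one half, so every (b,d,u,v) with u, v in U lies in N: at least |U|^2 >=
   4 |between a c| |between c a| elements of N start with (b,d).  The number
   of cycles with diagonal (a,c) is exactly that product, and a weighted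
   averaging over the two diagonals of each cycle (an AM-GM step, done over
   rat) turns these local bounds into 4 |C| <= |N|. *)

Lemma sum_card_fibers (K P : finType) (h : K -> P) (A : {set K}) :
  \sum_p #|[set k in A | h k == p]| = #|A|.
Proof.
rewrite -sum1_card (partition_big h xpredT) //=.
by apply: eq_bigr => p _; rewrite sum_nat_cond_const muln1.
Qed.

Section Ratio.
Local Open Scope ring_scope.

(* The AM-GM step: x/u + y/v >= 4 (v/u + u/v) >= 8. *)
Lemma ratio_pair_ge8 (R : realFieldType) (x y u v : R) :
  0 < u -> 0 < v -> 4 * v <= x -> 4 * u <= y -> 8 <= x / u + y / v.
Proof.
move=> u_gt0 v_gt0 vx uy; rewrite -subr_ge0.
have -> : x / u + y / v - 8
        = ((x - 4 * v) * v + (y - 4 * u) * u + 4 * (u - v) ^+ 2) / (u * v).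
  by field; rewrite ?lt0r_neq0.
apply: divr_ge0; last exact/ltW/mulr_gt0.
have sq_ge0 : 0 <= 4 * (u - v) ^+ 2 by rewrite mulr_ge0 ?sqr_ge0.
by rewrite !addr_ge0 // mulr_ge0 ?subr_ge0 // ltW.
Qed.
End Ratio.

(* Averaging over the two "diagonals" alpha, beta : K -> P of the elements of
   a finite set D, both of which have fibers of size g; f is the quantity to
   be bounded from below. *)
Section Averaging.
Local Open Scope ring_scope.
Variables (K P : finType) (D : {set K}) (g f : P -> nat).

Lemma fiber_nonempty (h : K -> P) k :
  (forall p, #|[set k in D | h k == p]|%N = g p) -> k \in D -> (0 < g (h k))%N.
Proof. by move=> <- kD; apply/card_gt0P; exists k; rewrite inE kD eqxx. Qed.

(* Summing f/g along D counts each p exactly g p times, so gives at most the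
   total of f. *)
Lemma fiber_average (h : K -> P) :
  (forall p, #|[set k in D | h k == p]|%N = g p) ->
  \sum_(k in D) (f (h k))%:R / (g (h k))%:R <= (\sum_p f p)%:R :> rat.
Proof.
move=> fiber; rewrite (partition_big h xpredT) //= natr_sum ler_sum // => p _.
rewrite (eq_bigr (fun=> (f p)%:R / (g p)%:R)) => [|k /andP[_ /eqP->]] //.
rewrite sumr_const -cardsE fiber.
have [->|g_neq0] := eqVneq (g p) 0%N; first by rewrite mulr0n.
by rewrite -[_ *+ g p]mulr_natr divfK ?pnatr_eq0.
Qed.

Lemma diagonal_averaging (alpha beta : K -> P) :
  (forall p, #|[set k in D | alpha k == p]|%N = g p) ->
  (forall p, #|[set k in D | beta k == p]|%N = g p) ->
  (forall k, k \in D -> 4 * g (beta k) <= f (alpha k))%N ->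
  (forall k, k \in D -> 4 * g (alpha k) <= f (beta k))%N ->
  (4 * #|D| <= \sum_p f p)%N.
Proof.
move=> fib_a fib_b f_a f_b.
pose r p : rat := (f p)%:R / (g p)%:R.
have ratio_ge8 k : k \in D -> 8 <= r (alpha k) + r (beta k).
  move=> kD; have := f_a k kD; have := f_b k kD.
  rewrite -!(ler_nat rat) !natrM => le_b le_a.
  by apply: ratio_pair_ge8 le_a le_b;
    rewrite ltr0n ?(fiber_nonempty fib_a) ?(fiber_nonempty fib_b).
have : \sum_(k in D) 8 <= \sum_(k in D) (r (alpha k) + r (beta k)) :> rat.
  exact: ler_sum.
rewrite sumr_const big_split /= -mulr_natr -(ler_nat rat) natrM.
have := fiber_average fib_a; have := fiber_average fib_b.
lra.
Qed.
End Averaging.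

Section FourCycles.
Variables (T : finType) (e : rel T).

Definition dicycle4 (t : T * T * T * T) : bool :=
  let: (a, b, c, d) := t in [&& e a b, e b c, e c d & e d a].

Definition cycle_set : {set T * T * T * T} := [set t | dicycle4 t].

Lemma dicycle4_rot a b c d : dicycle4 (d, a, b, c) = dicycle4 (a, b, c, d).
Proof. by rewrite /=; case: (e d a); rewrite /= ?andbT ?andbF. Qed.

Definition fix_head_perms : seq (T * T * T * T -> T * T * T * T) :=
  [:: fun t => let: (a, b, c, d) := t in (a, b, c, d);
      fun t => let: (a, b, c, d) := t in (a, b, d, c);
      fun t => let: (a, b, c, d) := t in (a, c, b, d);
      fun t => let: (a, b, c, d) := t in (a, c, d, b);
      fun t => let: (a, b, c, d) := t in (a, d, b, c);
      fun t => let: (a, b, c, d) := t in (a, d, c, b)].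

(* Each rearrangement is injective, so its preimages have the size of A. *)
Lemma sum_card_fix_head_preim (A : {set T * T * T * T}) :
  \sum_(s <- fix_head_perms) #|s @^-1: A| = 6 * #|A|.
Proof.
rewrite !big_cons big_nil !card_preimset; first by rewrite !mulSn mul0n.
all: by move=> [[[? ?] ?] ?] [[[? ?] ?] ?] [-> -> -> ->].
Qed.

Lemma induced_cycle_witness (W : {set T}) :
  induced_dicycle4 e W ->
  exists w0 w1 w2 w3, W = [set w0; w1; w2; w3] /\ dicycle4 (w0, w1, w2, w3).
Proof.
case/existsP=> w0 /existsP[w1 /existsP[w2 /existsP[w3 /and3P[_ /eqP defW]]]].
move/forall_inP=> edges; exists w0, w1, w2, w3; split => //.
have edge x y : x \in W -> y \in W -> e x y =
    [|| (x == w0) && (y == w1), (x == w1) && (y == w2),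
        (x == w2) && (y == w3) | (x == w3) && (y == w0)].
  by move=> /edges /forall_inP /[apply] /eqP.
have inW : {subset [:: w0; w1; w2; w3] <= W} by move=> x; rewrite defW !inE -!orbA.
by rewrite /= !edge ?inW ?inE ?eqxx ?orbT.
Qed.

Lemma set4_rot (x y z w : T) : [set x; y; z; w] = [set y; z; w; x].
Proof. by apply/setP => v; rewrite !inE; case: (v == x); rewrite ?orbT ?orbF. Qed.

Lemma arrange_cycle a b c d w0 w1 w2 w3 :
  uniq [:: a; b; c; d] -> [set a; b; c; d] = [set w0; w1; w2; w3] ->
  dicycle4 (w0, w1, w2, w3) ->
  has (fun s => s (a, b, c, d) \in cycle_set) fix_head_perms.
Proof.
move=> abcd defW /and4P[].
wlog a_w0 : w0 w1 w2 w3 defW / a = w0.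
  move=> base; have : a \in [set w0; w1; w2; w3] by rewrite -defW !inE eqxx.
  rewrite !inE -!orbA => /or4P[] /eqP a_eq; first exact: base.
  - by move=> *; apply: (base w1 w2 w3 w0) => //; rewrite defW set4_rot.
  - by move=> *; apply: (base w2 w3 w0 w1) => //; rewrite defW 2!set4_rot.
  - by move=> *; apply: (base w3 w0 w1 w2) => //; rewrite defW 3!set4_rot.
subst a => e01 e12 e23 e30.
have inW x : x \in [set w0; b; c; d] -> [|| x == w0, x == w1, x == w2 | x == w3].
  by rewrite defW !inE -!orbA.
(* Place b, c, d among w0..w3: non-injective placements contradict
   uniqueness, and each injective one is a rearrangement of (w0,w1,w2,w3). *)
move: (inW b) (inW c) (inW d) abcd; rewrite !inE !eqxx ?orbT.
move=> /(_ isT)/or4P[] /eqP-> /(_ isT)/or4P[] /eqP-> /(_ isT)/or4P[] /eqP->;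
rewrite /= !inE ?eqxx ?orbT /= ?andbF // => _; rewrite ?e01 ?e12 ?e23 ?e30 ?orbT //.
Qed.

(* Double counting the pairs (t, s) with t counted by S and s t a cycle. *)
Lemma S_count_le : S_count e <= 6 * #|cycle_set|.
Proof.
set S := [set t | distinct4 t && induced_dicycle4 e (vset4 t)].
have S_rearranges t : t \in S -> 0 < count (fun s => s t \in cycle_set) fix_head_perms.
  case: t => [[[a b] c] d]; rewrite inE => /andP[dist /induced_cycle_witness].
  case=> [w0 [w1 [w2 [w3 [defW cyc]]]]].
  by rewrite -has_count; exact: arrange_cycle defW cyc.
rewrite /S_count -/S -sum_card_fix_head_preim -sum1_card.
apply: (@leq_trans (\sum_t count (fun s => s t \in cycle_set) fix_head_perms)).
  rewrite [X in _ <= X](bigID (mem S)) /=; apply: leq_trans (leq_addr _ _).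
  exact: leq_sum.
rewrite (eq_bigr _ (fun t _ => esym (sum1_count _ _))) /=.
rewrite (exchange_big_dep xpredT) //=; apply: eq_leq; apply: eq_bigr => s _.
by rewrite sum_nat_cond_const muln1.
Qed.

Definition between (x z : T) : {set T} := [set y | e x y && e y z].

Definition diag_ac (t : T * T * T * T) : T * T := let: (a, _, c, _) := t in (a, c).
Definition diag_bd (t : T * T * T * T) : T * T := let: (_, b, _, d) := t in (b, d).

Definition diag_weight (p : T * T) : nat :=
  #|between p.1 p.2| * #|between p.2 p.1|.

Lemma fiber_ac p : #|[set t in cycle_set | diag_ac t == p]| = diag_weight p.
Proof.
case: p => a c; rewrite /diag_weight -cardsX /=.
rewrite -(card_imset _ (f := fun q : T * T => (a, q.1, c, q.2))); last first.
  by move=> [b d] [b' d'] [-> ->].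
apply: eq_card => -[[[a' b] c'] d]; rewrite !inE /=.
apply/andP/imsetP => [[/and4P[ab bc cd da] /eqP[<- <-]]|[[b' d'] /setXP[]]].
  by exists (b, d); rewrite // !inE ab bc cd da.
by rewrite !inE => /andP[ab bc] /andP[cd da] [-> -> -> ->]; rewrite ab bc cd da.
Qed.

Lemma fiber_bd p : #|[set t in cycle_set | diag_bd t == p]| = diag_weight p.
Proof.
case: p => b d; rewrite /diag_weight -cardsX /=.
rewrite -(card_imset _ (f := fun q : T * T => (q.2, b, q.1, d))); last first.
  by move=> [c a] [c' a'] [-> ->].
apply: eq_card => -[[[a b'] c] d']; rewrite !inE /=.
apply/andP/imsetP => [[/and4P[ab bc cd da] /eqP[<- <-]]|[[c' a'] /setXP[]]].
  by exists (c, a); rewrite // !inE ab bc cd da.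
by rewrite !inE => /andP[bc cd] /andP[da ab] [-> -> -> ->]; rewrite ab bc cd da.
Qed.

Section ThreeFree.
Hypothesis H3 : three_free e.

Lemma edge_neq u v : e u v -> u != v.
Proof. by case: H3 => noloop _ _; apply: contraTneq => ->; exact: noloop. Qed.

(* An edge from between a c to between c a would close a triangle with a. *)
Lemma between_no_cross a c x y :
  x \in between a c -> y \in between c a -> ~~ e x y.
Proof.
case: H3 => _ _ notri; rewrite !inE => /andP[ax _] /andP[_ ya].
apply/negP => xy; have y_neq_a := edge_neq ya.
have uniq_axy : uniq [:: a; x; y].
  by rewrite /= !inE !negb_or edge_neq // eq_sym y_neq_a edge_neq.
by have := notri _ _ _ uniq_axy; rewrite ax xy ya.
Qed.

(* A vertex in both sets would lie on a directed 2-cycle with c. *)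
Lemma between_disjoint a c : [disjoint between a c & between c a].
Proof.
case: H3 => _ no2 _; rewrite -setI_eq0; apply/eqP/setP => y; rewrite !inE.
apply/negP => /andP[/andP[_ yc] /andP[cy _]].
by have := no2 _ _ (edge_neq yc); rewrite yc cy.
Qed.

Lemma edge_keeps_side a c x y :
  x \in between a c :|: between c a -> y \in between a c :|: between c a ->
  e x y -> (x \in between a c) = (y \in between a c).
Proof.
rewrite !in_setU => /orP[] x_in /orP[] y_in xy.
- by rewrite x_in y_in.
- by move: (between_no_cross x_in y_in); rewrite xy.
- by move: (between_no_cross x_in y_in); rewrite xy.
- by rewrite !(disjointFl (between_disjoint a c)).
Qed.

Lemma path4_one_side a c (A : {set T}) :
  A \subset between a c :|: between c a -> has_path4_on e A ->
  {in A &, forall x y, (x \in between a c) = (y \in between a c)}.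
Proof.
move=> /subsetP A_sub.
case/existsP=> v1 /existsP[v2 /existsP[v3 /existsP[v4 /and5P[_ e12 e23 e34 /eqP defA]]]].
have in_A : {subset [:: v1; v2; v3; v4] <= A}.
  by move=> v; rewrite defA !inE -!orbA.
have side x y : x \in [:: v1; v2; v3; v4] -> y \in [:: v1; v2; v3; v4] -> e x y ->
    (x \in between a c) = (y \in between a c).
  by move=> /in_A/A_sub x_in /in_A/A_sub y_in; apply: edge_keeps_side.
suff same v : v \in A -> (v \in between a c) = (v1 \in between a c).
  by move=> x y /same-> /same->.
move=> vA; have : [|| v == v1, v == v2, v == v3 | v == v4].
  by move: vA; rewrite defA !inE -!orbA.
by case/or4P=> /eqP->;
  rewrite -?(side v3 v4) -?(side v2 v3) -?(side v1 v2) ?inE ?eqxx ?orbT.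
Qed.

Lemma straddling_no_path a c b d u v :
  b \in between a c -> d \in between c a ->
  u \in between a c :|: between c a -> v \in between a c :|: between c a ->
  (b, d, u, v) \in N_set e.
Proof.
move=> bA dB uU vU; rewrite inE; apply/negP => path4.
have sub : vset4 (b, d, u, v) \subset between a c :|: between c a.
  by rewrite /vset4 !subUset !sub1set uU vU (subsetP (subsetUl _ _) _ bA)
    (subsetP (subsetUr _ _) _ dB).
have b_in : b \in vset4 (b, d, u, v) by rewrite !inE eqxx.
have d_in : d \in vset4 (b, d, u, v) by rewrite !inE eqxx orbT.
have := path4_one_side sub path4 b_in d_in.
by rewrite bA (disjointFl (between_disjoint a c) dB).
Qed.

Definition head2 (t : T * T * T * T) : T * T := let: (x, z, _, _) := t in (x, z).

Definition N_slice (p : T * T) : nat := #|[set t in N_set e | head2 t == p]|.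

Lemma N_slice_large a b c d :
  dicycle4 (a, b, c, d) -> 4 * diag_weight (a, c) <= N_slice (b, d).
Proof.
move=> /and4P[ab bc cd da]; rewrite /diag_weight /=.
set A := between a c; set B := between c a.
have bA : b \in A by rewrite inE ab bc.
have dB : d \in B by rewrite inE cd da.
have card_AB : #|A :|: B| = #|A| + #|B|.
  by rewrite cardsU (disjoint_setI0 (between_disjoint a c)) cards0 subn0.
apply: (@leq_trans #|setX (A :|: B) (A :|: B)|).
  by rewrite cardsX card_AB mulnn; exact: (nat_AGM2 _ _).1.
rewrite -(card_imset _ (f := fun q : T * T => (b, d, q.1, q.2))); last first.
  by move=> [? ?] [? ?] [-> ->].
apply/subset_leq_card/subsetP => _ /imsetP[[u v] /setXP[uAB vAB] ->].
by apply/setIdP; split; first exact: straddling_no_path bA dB uAB vAB.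
Qed.

Lemma cycles_le_N : 4 * #|cycle_set| <= #|N_set e|.
Proof.
rewrite -[#|N_set e|](sum_card_fibers head2).
apply: (diagonal_averaging (g := diag_weight) (f := N_slice) fiber_ac fiber_bd).
  move=> [[[a b] c] d]; rewrite inE -dicycle4_rot => cyc.
  by rewrite /diag_weight /= [#|between b d| * _]mulnC; exact: N_slice_large cyc.
by move=> [[[a b] c] d]; rewrite inE; exact: N_slice_large.
Qed.
End ThreeFree.
End FourCycles.

Theorem mainTheorem17 (T : finType) (e : rel T)
    (Hloop : loopless e) (H3 : three_free e) :
  2 * S_count e <= 3 * #|N_set e|.
Proof.
apply: (@leq_trans (3 * (4 * #|cycle_set e|))); last by rewrite leq_mul2l cycles_le_N.
by rewrite mulnA -[3 * 4]/(2 * 6) -mulnA leq_mul2l S_count_le.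
Qed.
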